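(* Assume (F1)–(F3), let $\tau\ge0$, $c\ge0$, and suppose $f'(w)<0$ for $w_0\le w<1$. If $w$ is a solution of problem (P) with these $\tau,c$ such that $w'(x)\le0$ for all $x\in\mathbb R$, then $w'(x)<0$ for all $x\in\mathbb R$.
   Context: $f:\mathbb R\to\mathbb R$ is $C^4$ with bounded derivatives and satisfies: (F1) $f(w)>0$ for $0\le w<1$, $f(1)=0$, $f'(1)>-1$; (F2) $f(0)>1$, $f'(0)>0$, and $f(w)>1$ for $0\le w<w_*$ for some $w_*\in(0,1)$; (F3) the equation $f(w)=1-w$ has exactly one solution $w_0$ in $(0,1)$, and $f'(w_0)<-1$; hence $f(w)>1-w$ for $0\le w<w_0$ and $f(w)<1-w$ for $w_0<w<1$. Problem (P) for given $\tau\ge0$, $c\in\mathbb R$: find $w\in C^2(\mathbb R)$ with $w''(x)+cw'(x)+w(x)\big(1-w(x)-f(w(x+c\tau))\big)=0$ for all $x$, and $w(-\infty)=1$, $w(+\infty)=0$. *)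

From Stdlib Require Import Reals Lra.
Open Scope R_scope.

Definition lim_pinfty (g : R -> R) (l : R) : Prop :=
  forall eps : R, eps > 0 -> exists M : R, forall x : R, x >= M -> Rabs (g x - l) < eps.

Definition lim_minfty (g : R -> R) (l : R) : Prop :=
  forall eps : R, eps > 0 -> exists M : R, forall x : R, x <= M -> Rabs (g x - l) < eps.

Definition bounded_fun (g : R -> R) : Prop := exists B : R, forall x : R, Rabs (g x) <= B.

Definition C4_bounded_derivs (f f1 f2 f3 f4 : R -> R) : Prop :=
  (forall x, derivable_pt_lim f x (f1 x)) /\
  (forall x, derivable_pt_lim f1 x (f2 x)) /\
  (forall x, derivable_pt_lim f2 x (f3 x)) /\
  (forall x, derivable_pt_lim f3 x (f4 x)) /\
  continuity f4 /\
  bounded_fun f1 /\ bounded_fun f2 /\ bounded_fun f3 /\ bounded_fun f4.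

Definition C2_with (w w1 w2 : R -> R) : Prop :=
  (forall x, derivable_pt_lim w x (w1 x)) /\
  (forall x, derivable_pt_lim w1 x (w2 x)) /\
  continuity w2.

Definition solves_P (f : R -> R) (tau c : R) (w w1 w2 : R -> R) : Prop :=
  C2_with w w1 w2 /\
  (forall x, w2 x + c * w1 x + w x * (1 - w x - f (w (x + c * tau))) = 0) /\
  lim_minfty w 1 /\ lim_pinfty w 0.

From Stdlib Require Import Reals Lra.
Open Scope R_scope.

(* A nonincreasing wave lies in [0, 1], and in fact in (0, 1): touching 0 (or touching 1
   when c tau = 0) gives the Cauchy data of a rest state, and a second-order equation
   w'' = r with |r| <= K (|w - e| + |w'|) has only the constant solution with such data,
   by a mean value estimate on intervals of length 1 / (2 (1 + K)).  Touching 1 when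
   c tau > 0 forces f (w (x + c tau)) = 0, so w = 1 recurs at x + c tau, x + 2 c tau, ...,
   against w (+oo) = 0.
   Now let w' (x) = 0.  Then w' is maximal at x, so w'' (x) = 0 and the equation gives
   f (w (x + c tau)) = 1 - w (x) <= 1 - w (x + c tau), whence w (x + c tau) >= w0.  There
   w''' (x) = w (x) f' (w (x + c tau)) w' (x + c tau) >= 0, while maximality of w' forces
   w''' (x) <= 0; hence w' (x + c tau) = 0.  Critical points thus recur with step c tau at
   height >= w0, again against w (+oo) = 0.  If c tau = 0 the critical value w (x) solves
   f (u) = 1 - u and is a rest state, excluded as above. *)

Lemma derivable_pt_lim_max_0 (g : R -> R) (x l : R) :
  derivable_pt_lim g x l -> (forall y, g y <= g x) -> l = 0.
Proof.
  intros Hd Hmax.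
  exact (deriv_maximum g (x - 1) (x + 1) x (exist _ l Hd) ltac:(lra) ltac:(lra)
           (fun y _ _ => Hmax y)).
Qed.

Lemma derivable_pt_lim_min_0 (g : R -> R) (x l : R) :
  derivable_pt_lim g x l -> (forall y, g x <= g y) -> l = 0.
Proof.
  intros Hd Hmin.
  exact (deriv_minimum g (x - 1) (x + 1) x (exist _ l Hd) ltac:(lra) ltac:(lra)
           (fun y _ _ => Hmin y)).
Qed.

Lemma decreasing_of_deriv_nonpos (g g' : R -> R) :
  (forall x, derivable_pt_lim g x (g' x)) -> (forall x, g' x <= 0) -> decreasing g.
Proof.
  intros Hd Hneg.
  exact (nonpos_derivative_1 g (fun x => exist _ (g' x) (Hd x)) Hneg).
Qed.

Lemma Rabs_sub_le_of_deriv_bound (g g' : R -> R) (B : R) :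
  (forall x, derivable_pt_lim g x (g' x)) -> (forall x, Rabs (g' x) <= B) ->
  forall u v, Rabs (g u - g v) <= B * Rabs (u - v).
Proof.
  intros Hd HB u v.
  destruct (MVT_abs g g' v u (fun z _ => Hd z)) as [z [Hz _]].
  rewrite Hz. apply Rmult_le_compat_r; [apply Rabs_pos | apply HB].
Qed.

Lemma decreasing_between_limits (g : R -> R) (a b : R) :
  decreasing g -> lim_minfty g a -> lim_pinfty g b -> forall x, b <= g x <= a.
Proof.
  intros Hdec Ha Hb x. split.
  - destruct (Rle_or_lt b (g x)) as [|Hlt]; [assumption | exfalso].
    destruct (Hb (b - g x) ltac:(lra)) as [M HM].
    specialize (HM (Rmax M x) (Rle_ge _ _ (Rmax_l M x))).
    specialize (Hdec x (Rmax M x) (Rmax_r M x)).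
    apply Rabs_def2 in HM. lra.
  - destruct (Rle_or_lt (g x) a) as [|Hlt]; [assumption | exfalso].
    destruct (Ha (g x - a) ltac:(lra)) as [M HM].
    specialize (HM (Rmin M x) (Rmin_l M x)).
    specialize (Hdec (Rmin M x) x (Rmin_r M x)).
    apply Rabs_def2 in HM. lra.
Qed.

Lemma above_antidiagonal_before_crossing (f : R -> R) (w0 : R) :
  continuity f -> f 0 > 1 -> 0 < w0 < 1 ->
  (forall u, 0 < u < 1 -> f u = 1 - u -> u = w0) ->
  forall u, 0 <= u < w0 -> f u > 1 - u.
Proof.
  intros Hf Hf0 Hw0 Huniq u Hu.
  destruct (Rlt_or_le (1 - u) (f u)) as [|Hle]; [assumption | exfalso].
  set (g := fun x => f x - (1 - x)).
  assert (Hg : continuity g).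
  { intro x. unfold g. reg. }
  destruct (IVT_cor g 0 u Hg ltac:(lra) ltac:(unfold g; nra)) as [z [Hz Hgz]].
  unfold g in Hgz.
  assert (z <> 0) by (intros ->; lra).
  assert (z = w0) by (apply Huniq; lra).
  lra.
Qed.

Lemma second_order_vanishes_near (p q r : R -> R) (K a b e : R) :
  0 <= K -> (b - a) * (1 + K) < 1 -> a <= e <= b ->
  (forall x, derivable_pt_lim p x (q x)) -> (forall x, derivable_pt_lim q x (r x)) ->
  (forall x, a <= x <= b -> Rabs (r x) <= K * (Rabs (p x) + Rabs (q x))) ->
  p e = 0 -> q e = 0 ->
  forall x, a <= x <= b -> p x = 0 /\ q x = 0.
Proof.
  intros HK Hshort He Hp Hq Hr Hpe Hqe.
  set (V := fun x => Rabs (p x) + Rabs (q x)).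
  assert (HV : forall x, 0 <= Rabs (p x) /\ 0 <= Rabs (q x)) by (split; apply Rabs_pos).
  destruct (continuity_ab_maj V a b) as [m [Hmax Hm]]; [lra | |].
  { intros x _. apply continuity_pt_plus; apply (continuity_pt_comp _ Rabs);
      try apply Rcontinuity_abs; apply derivable_continuous_pt.
    - exists (q x). apply Hp.
    - exists (r x). apply Hq. }
  assert (Hdist : Rabs (m - e) <= b - a) by (apply Rabs_le; lra).
  (* By the mean value theorem from e, |p m| <= (b - a) V m and |q m| <= (b - a) K V m. *)
  destruct (MVT_abs p q e m (fun z _ => Hp z)) as [z1 [Hz1 Iz1]].
  destruct (MVT_abs q r e m (fun z _ => Hq z)) as [z2 [Hz2 Iz2]].
  rewrite Hpe, Rminus_0_r in Hz1. rewrite Hqe, Rminus_0_r in Hz2.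
  assert (Hbetween : forall z, Rmin e m <= z <= Rmax e m -> a <= z <= b).
  { intros z Hz. generalize (Rmin_glb e m a ltac:(lra) ltac:(lra))
                            (Rmax_lub e m b ltac:(lra) ltac:(lra)). lra. }
  apply Hbetween in Iz1, Iz2.
  assert (Hpm : Rabs (p m) <= V m * (b - a)).
  { rewrite Hz1. apply Rmult_le_compat; try apply Rabs_pos; [|lra].
    generalize (Hmax z1 Iz1) (HV z1). unfold V. lra. }
  assert (Hqm : Rabs (q m) <= K * V m * (b - a)).
  { rewrite Hz2. apply Rmult_le_compat; try apply Rabs_pos; [|lra].
    generalize (Hmax z2 Iz2) (Hr z2 Iz2) (HV z2). unfold V. nra. }
  assert (Vm : V m <= 0).
  { assert (V m <= V m * ((b - a) * (1 + K))) by (unfold V at 1; lra).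
    generalize (HV m). unfold V in *. nra. }
  assert (Habs0 : forall t, Rabs t <= 0 -> t = 0)
    by (intros t Ht; generalize (Rle_abs t) (Rle_abs (- t)); rewrite Rabs_Ropp; lra).
  intros x Hx. generalize (Hmax x Hx) (HV x). unfold V in *. intros.
  split; apply Habs0; lra.
Qed.

Lemma second_order_vanishes (p q r : R -> R) (K x0 : R) :
  0 <= K ->
  (forall x, derivable_pt_lim p x (q x)) -> (forall x, derivable_pt_lim q x (r x)) ->
  (forall x, Rabs (r x) <= K * (Rabs (p x) + Rabs (q x))) ->
  p x0 = 0 -> q x0 = 0 -> forall x, p x = 0.
Proof.
  intros HK Hp Hq Hr Hp0 Hq0.
  set (d := / (2 * (1 + K))).
  assert (Hd : 0 < d) by (apply Rinv_0_lt_compat; lra).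
  assert (Hshort : d * (1 + K) < 1) by (unfold d; field_simplify; lra).
  assert (Hgrow : forall n, forall y, x0 - INR n * d <= y <= x0 + INR n * d ->
                    p y = 0 /\ q y = 0).
  { induction n as [|n IH]; intros y Hy.
    - replace y with x0 by (simpl in Hy; lra). auto.
    - rewrite S_INR in Hy.
      set (a := x0 - INR n * d). set (b := x0 + INR n * d).
      assert (Hn : 0 <= INR n * d) by (apply Rmult_le_pos; [apply pos_INR | lra]).
      destruct (Rle_or_lt y b) as [Hyb|Hyb]; destruct (Rle_or_lt a y) as [Hay|Hay].
      + apply IH. unfold a, b in *. lra.
      + destruct (IH a ltac:(unfold a; lra)) as [Hpa Hqa].
        apply (second_order_vanishes_near p q r K (a - d) a a HK ltac:(lra) ltac:(lra)
                 Hp Hq (fun z _ => Hr z) Hpa Hqa).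
        unfold a in *. lra.
      + destruct (IH b ltac:(unfold b; lra)) as [Hpb Hqb].
        apply (second_order_vanishes_near p q r K b (b + d) b HK ltac:(lra) ltac:(lra)
                 Hp Hq (fun z _ => Hr z) Hpb Hqb).
        unfold b in *. lra.
      + unfold a, b in *. lra. }
  intros x.
  destruct (INR_unbounded (Rabs (x - x0) / d)) as [n Hn].
  assert (Hnd : Rabs (x - x0) < INR n * d).
  { apply (Rmult_lt_compat_r d) in Hn; [|assumption].
    unfold Rdiv in Hn. rewrite Rmult_assoc, Rinv_l, Rmult_1_r in Hn; lra. }
  apply Rabs_def2 in Hnd.
  apply (Hgrow n x). lra.
Qed.

Lemma shift_invariant_escapes (P : R -> Prop) (g : R -> R) (h m l : R) :
  0 < h -> l < m -> lim_pinfty g l ->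
  (forall x, P x -> P (x + h)) -> (forall x, P x -> m <= g x) ->
  forall x, ~ P x.
Proof.
  intros Hh Hlm Hlim Hshift Hm x Hx.
  assert (Hiter : forall n, P (x + INR n * h)).
  { induction n as [|n IH].
    - simpl. rewrite Rmult_0_l, Rplus_0_r. exact Hx.
    - rewrite S_INR. replace (x + (INR n + 1) * h) with (x + INR n * h + h) by ring.
      apply Hshift, IH. }
  destruct (Hlim (m - l) ltac:(lra)) as [M HM].
  destruct (INR_unbounded ((M - x) / h)) as [n Hn].
  assert (Hfar : x + INR n * h >= M).
  { apply (Rmult_lt_compat_r h) in Hn; [|assumption].
    unfold Rdiv in Hn. rewrite Rmult_assoc, Rinv_l, Rmult_1_r in Hn; lra. }
  specialize (HM _ Hfar). apply Rabs_def2 in HM.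
  specialize (Hm _ (Hiter n)). lra.
Qed.

Lemma derivable_pt_lim_gt_right (g : R -> R) (x D : R) :
  derivable_pt_lim g x D -> 0 < D ->
  exists d, 0 < d /\ forall s, 0 < s < d -> g x < g (x + s).
Proof.
  intros Hd HD. destruct (Hd D HD) as [d Hdq].
  exists d. split; [apply cond_pos|]. intros s Hs.
  assert (Hq : Rabs ((g (x + s) - g x) / s - D) < D)
    by (apply Hdq; [lra | rewrite Rabs_pos_eq; lra]).
  apply Rabs_def2 in Hq.
  assert (Hpos : 0 < (g (x + s) - g x) / s) by lra.
  unfold Rdiv in Hpos.
  apply (Rmult_lt_compat_r s) in Hpos; [|lra].
  rewrite Rmult_assoc, Rinv_l, Rmult_1_r, Rmult_0_l in Hpos; lra.
Qed.

Lemma second_derivative_nonpos_at_max (g g' : R -> R) (x D : R) :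
  (forall y, derivable_pt_lim g y (g' y)) -> (forall y, g y <= g x) ->
  g' x = 0 -> derivable_pt_lim g' x D -> D <= 0.
Proof.
  intros Hg Hmax Hcrit HD.
  destruct (Rle_or_lt D 0) as [|HDpos]; [assumption | exfalso].
  destruct (derivable_pt_lim_gt_right g' x D HD HDpos) as [d [Hd Hincr]].
  destruct (MVT_cor2 g g' x (x + d / 2) ltac:(lra) (fun z _ => Hg z)) as [z [Hz Iz]].
  specialize (Hincr (z - x) ltac:(lra)).
  replace (x + (z - x)) with z in Hincr by ring.
  specialize (Hmax (x + d / 2)). nra.
Qed.

Section TravellingWave.

Variables (f f1 w w1 w2 : R -> R) (c tau B w0 : R).

Hypothesis f_deriv : forall u, derivable_pt_lim f u (f1 u).
Hypothesis f1_bound : forall u, Rabs (f1 u) <= B.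
Hypothesis f_pos : forall u, 0 <= u < 1 -> f u > 0.
Hypothesis f_one : f 1 = 0.
Hypothesis w0_pos : 0 < w0.
Hypothesis f_above : forall u, 0 <= u < w0 -> f u > 1 - u.
Hypothesis f1_neg : forall u, w0 <= u < 1 -> f1 u < 0.
Hypothesis c_nonneg : 0 <= c.
Hypothesis tau_nonneg : 0 <= tau.
Hypothesis w_deriv : forall x, derivable_pt_lim w x (w1 x).
Hypothesis w1_deriv : forall x, derivable_pt_lim w1 x (w2 x).
Hypothesis wave_eq :
  forall x, w2 x + c * w1 x + w x * (1 - w x - f (w (x + c * tau))) = 0.
Hypothesis w1_nonpos : forall x, w1 x <= 0.
Hypothesis w_minfty : lim_minfty w 1.
Hypothesis w_pinfty : lim_pinfty w 0.

Lemma delay_pos : c * tau <> 0 -> 0 < c * tau.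
Proof. intros Hct. generalize (Rmult_le_pos c tau c_nonneg tau_nonneg). lra. Qed.

Lemma wave_range x : 0 <= w x <= 1.
Proof.
  exact (decreasing_between_limits w 1 0
           (decreasing_of_deriv_nonpos w w1 w_deriv w1_nonpos) w_minfty w_pinfty x).
Qed.

Lemma f_lipschitz u v : Rabs (f u - f v) <= B * Rabs (u - v).
Proof. exact (Rabs_sub_le_of_deriv_bound f f1 B f_deriv f1_bound u v). Qed.

Lemma reaction_bound u v :
  0 <= u <= 1 -> 0 <= v <= 1 -> Rabs (1 - v - f u) <= 2 + Rabs (f 0) + B.
Proof.
  intros Hu Hv.
  assert (Hf : Rabs (f u - f 0) <= B).
  { generalize (f_lipschitz u 0) (f1_bound 0) (Rabs_pos (f1 0)).
    rewrite Rminus_0_r, (Rabs_pos_eq u) by lra. nra. }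
  replace (1 - v - f u) with ((1 - v) - (f u - f 0) - f 0) by ring.
  generalize (Rabs_triang ((1 - v) - (f u - f 0)) (- f 0))
             (Rabs_triang (1 - v) (- (f u - f 0))).
  rewrite !Rabs_Ropp, (Rabs_pos_eq (1 - v)) by lra. unfold Rminus in *. lra.
Qed.

Lemma wave_w2_zero_of_w1_zero x : w1 x = 0 -> w2 x = 0.
Proof.
  intros Hx. apply (derivable_pt_lim_max_0 w1 x (w2 x) (w1_deriv x)).
  intros y. rewrite Hx. apply w1_nonpos.
Qed.

Lemma wave_pos x : 0 < w x.
Proof.
  destruct (wave_range x) as [[|Hx] _]; [assumption | exfalso].
  set (K := c + (2 + Rabs (f 0) + B)).
  assert (HK : 0 <= K)
    by (generalize (Rabs_pos (f 0)) (Rabs_pos (f1 0)) (f1_bound 0); unfold K; lra).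
  assert (Hw1 : w1 x = 0).
  { apply (derivable_pt_lim_min_0 w x (w1 x) (w_deriv x)).
    intros y. rewrite <- Hx. apply wave_range. }
  assert (Hr : forall y, Rabs (w2 y) <= K * (Rabs (w y) + Rabs (w1 y))).
  { intros y.
    replace (w2 y) with (- (c * w1 y) - w y * (1 - w y - f (w (y + c * tau))))
      by (generalize (wave_eq y); lra).
    generalize (reaction_bound (w (y + c * tau)) (w y) (wave_range _) (wave_range _)).
    generalize (Rabs_triang (- (c * w1 y)) (- (w y * (1 - w y - f (w (y + c * tau)))))).
    rewrite !Rabs_Ropp, !Rabs_mult, (Rabs_pos_eq c) by lra.
    generalize (Rabs_pos (w y)) (Rabs_pos (w1 y)) (Rabs_pos (1 - w y - f (w (y + c * tau)))).
    unfold K, Rminus. nra. }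
  assert (Hzero := second_order_vanishes w w1 w2 K x HK w_deriv w1_deriv Hr (eq_sym Hx) Hw1).
  destruct (w_minfty (1 / 2) ltac:(lra)) as [M HM].
  specialize (HM M (Rle_refl M)). rewrite Hzero in HM. apply Rabs_def2 in HM. lra.
Qed.

Lemma no_delay_wave_avoids_equilibrium e x0 :
  c * tau = 0 -> 0 < e <= 1 -> f e = 1 - e -> w x0 = e -> w1 x0 = 0 -> False.
Proof.
  intros Hct He Hfe Hx0 Hw1.
  set (M := 2 + Rabs (f 0) + B).
  set (K := c + M + (1 + B)).
  assert (HB : 0 <= B) by (generalize (Rabs_pos (f1 0)) (f1_bound 0); lra).
  assert (HM : 0 <= M) by (generalize (Rabs_pos (f 0)); unfold M; lra).
  assert (HK : 0 <= K) by (unfold K; lra).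
  set (p := fun y => w y - e).
  assert (Hp : forall y, derivable_pt_lim p y (w1 y)).
  { intros y. replace (w1 y) with (w1 y - 0) by ring.
    apply derivable_pt_lim_minus; [apply w_deriv | apply derivable_pt_lim_const]. }
  (* Since e (1 - e - f e) = 0, the reaction term is Lipschitz in w - e. *)
  assert (Hr : forall y, Rabs (w2 y) <= K * (Rabs (p y) + Rabs (w1 y))).
  { intros y. unfold p.
    assert (Hwy := wave_range y).
    replace (w2 y) with (- (c * w1 y) - (w y - e) * (1 - w y - f (w y))
                         - e * ((e - w y) + (f e - f (w y))))
      by (generalize (wave_eq y); rewrite Hct, Rplus_0_r, Hfe; nra).
    assert (T1 : Rabs ((w y - e) * (1 - w y - f (w y))) <= M * Rabs (w y - e)).
    { rewrite Rabs_mult, Rmult_comm. apply Rmult_le_compat_r; [apply Rabs_pos|].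
      exact (reaction_bound (w y) (w y) Hwy Hwy). }
    assert (T2 : Rabs (e * ((e - w y) + (f e - f (w y)))) <= (1 + B) * Rabs (w y - e)).
    { rewrite Rabs_mult, (Rabs_pos_eq e) by lra.
      generalize (Rabs_triang (e - w y) (f e - f (w y))) (f_lipschitz e (w y))
                 (Rabs_pos (e - w y + (f e - f (w y)))) (Rabs_pos (w y - e)).
      rewrite (Rabs_minus_sym (w y) e). nra. }
    generalize (Rabs_triang (- (c * w1 y) - (w y - e) * (1 - w y - f (w y)))
                            (- (e * ((e - w y) + (f e - f (w y)))))).
    generalize (Rabs_triang (- (c * w1 y)) (- ((w y - e) * (1 - w y - f (w y))))).
    rewrite !Rabs_Ropp, (Rabs_mult c), (Rabs_pos_eq c) by lra.
    generalize (Rabs_pos (w y - e)) (Rabs_pos (w1 y)).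
    unfold K, Rminus in *. nra. }
  assert (Hrest := second_order_vanishes p w1 w2 K x0 HK Hp w1_deriv Hr
                     ltac:(unfold p; lra) Hw1).
  destruct (w_pinfty e ltac:(lra)) as [N HN].
  specialize (HN N (Rle_refl N)). specialize (Hrest N). unfold p in Hrest.
  apply Rabs_def2 in HN. lra.
Qed.

Lemma wave_lt_1 x : w x < 1.
Proof.
  destruct (wave_range x) as [_ [|Hx]]; [assumption | exfalso].
  assert (Hflat : forall y, w y = 1 -> w1 y = 0).
  { intros y Hy. apply (derivable_pt_lim_max_0 w y (w1 y) (w_deriv y)).
    intros z. rewrite Hy. apply wave_range. }
  destruct (Req_dec (c * tau) 0) as [Hct|Hct].
  - exact (no_delay_wave_avoids_equilibrium 1 x Hct ltac:(lra) ltac:(lra) Hx (Hflat x Hx)).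
  - assert (Hdelay : 0 < c * tau) by (apply delay_pos; exact Hct).
    (* At a point where w = 1 the equation reduces to f (w (y + c tau)) = 0. *)
    apply (shift_invariant_escapes (fun y => w y = 1) w (c * tau) 1 0 Hdelay
             ltac:(lra) w_pinfty) with x; [|intros y Hy; lra|exact Hx].
    intros y Hy.
    assert (Hfy : f (w (y + c * tau)) = 0).
    { generalize (wave_eq y).
      rewrite (wave_w2_zero_of_w1_zero y (Hflat y Hy)), (Hflat y Hy), Hy. lra. }
    destruct (wave_range (y + c * tau)) as [H0 [Hlt|Heq]]; [|exact Heq].
    generalize (f_pos _ (conj H0 Hlt)). lra.
Qed.

Lemma wave_w2_deriv x :
  derivable_pt_lim w2 x
    (- c * w2 x - w1 x * (1 - w x - f (w (x + c * tau)))
     + w x * (w1 x + f1 (w (x + c * tau)) * w1 (x + c * tau))).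
Proof.
  apply (derivable_pt_lim_ext
           (fun y => - c * w1 y - w y * (1 - w y - f (w (y + c * tau)))));
    [intros y; generalize (wave_eq y); lra|].
  assert (Hshift : derivable_pt_lim (fun y => y + c * tau) x 1).
  { replace 1 with (1 + 0) by ring.
    apply (derivable_pt_lim_plus id (fun _ => c * tau));
      [apply derivable_pt_lim_id | apply derivable_pt_lim_const]. }
  assert (Hdelayed := derivable_pt_lim_comp _ f x _ _
                        (derivable_pt_lim_comp _ w x _ _ Hshift (w_deriv _)) (f_deriv _)).
  assert (Hreact := derivable_pt_lim_minus _ _ x _ _
                      (derivable_pt_lim_minus (fun _ => 1) w x _ _
                         (derivable_pt_lim_const 1 x) (w_deriv x)) Hdelayed).
  assert (Hall := derivable_pt_lim_minus _ _ x _ _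
                    (derivable_pt_lim_scal w1 (- c) x _ (w1_deriv x))
                    (derivable_pt_lim_mult w _ x _ _ (w_deriv x) Hreact)).
  unfold minus_fct, mult_fct, comp in Hall. cbv beta in Hall.
  match goal with |- derivable_pt_lim _ _ ?target =>
    match type of Hall with derivable_pt_lim _ _ ?l => replace target with l by ring end
  end.
  exact Hall.
Qed.

Lemma wave_critical_shift x :
  0 < c * tau -> w1 x = 0 -> w1 (x + c * tau) = 0 /\ w0 <= w (x + c * tau).
Proof.
  intros Hdelay Hx.
  assert (Hw2 := wave_w2_zero_of_w1_zero x Hx).
  set (a := w x). set (b := w (x + c * tau)).
  assert (Ha : 0 < a) by apply wave_pos.
  assert (Hfb : f b = 1 - a).
  { generalize (wave_eq x). fold a b. rewrite Hw2, Hx. intros Heq.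
    assert (Hprod : a * (1 - a - f b) = 0) by lra.
    apply Rmult_integral in Hprod. lra. }
  assert (Hba : b <= a)
    by (apply (decreasing_of_deriv_nonpos w w1 w_deriv w1_nonpos); lra).
  assert (Hb : w0 <= b).
  { destruct (Rle_or_lt w0 b) as [|Hlt]; [assumption | exfalso].
    generalize (f_above b ltac:(generalize (wave_range (x + c * tau)); fold b; lra)). lra. }
  split; [|exact Hb].
  (* w1 is maximal at x, so w1'' (x) = a f1 (b) w1 (x + c tau) must be nonpositive. *)
  assert (HD := second_derivative_nonpos_at_max w1 w2 x _ w1_deriv
                  ltac:(intros y; rewrite Hx; apply w1_nonpos) Hw2 (wave_w2_deriv x)).
  rewrite Hw2, Hx in HD. fold a b in HD.
  assert (Hf1b : f1 b < 0) by (apply f1_neg; split; [exact Hb | apply wave_lt_1]).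
  assert (Hnext := w1_nonpos (x + c * tau)).
  destruct (Rle_or_lt 0 (w1 (x + c * tau))) as [|Hneg]; [lra|].
  assert (0 < a * (- f1 b) * (- w1 (x + c * tau)))
    by (apply Rmult_lt_0_compat; [apply Rmult_lt_0_compat|]; lra).
  nra.
Qed.

Lemma wave_strictly_decreasing x : w1 x < 0.
Proof.
  destruct (w1_nonpos x) as [|Hx]; [assumption | exfalso].
  destruct (Req_dec (c * tau) 0) as [Hct|Hct].
  - assert (Hfx : f (w x) = 1 - w x).
    { generalize (wave_eq x). rewrite Hct, Rplus_0_r, (wave_w2_zero_of_w1_zero x Hx), Hx.
      intros Heq. assert (Hprod : w x * (1 - w x - f (w x)) = 0) by lra.
      apply Rmult_integral in Hprod. generalize (wave_pos x). lra. }
    exact (no_delay_wave_avoids_equilibrium (w x) x Hct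
             (conj (wave_pos x) (Rlt_le _ _ (wave_lt_1 x))) Hfx eq_refl Hx).
  - assert (Hdelay : 0 < c * tau) by (apply delay_pos; exact Hct).
    apply (shift_invariant_escapes (fun y => w1 y = 0 /\ w0 <= w y) w (c * tau) w0 0
             Hdelay w0_pos w_pinfty) with (x + c * tau).
    + intros y [Hy _]. exact (wave_critical_shift y Hdelay Hy).
    + intros y [_ Hy]. exact Hy.
    + exact (wave_critical_shift x Hdelay Hx).
Qed.

End TravellingWave.

Theorem lemma3p1 (f f1 f2 f3 f4 : R -> R) (wstar w0 tau c : R)
  (w w1 w2 : R -> R)
  (Hf : C4_bounded_derivs f f1 f2 f3 f4)
  (HF1a : forall u, 0 <= u < 1 -> f u > 0)
  (HF1b : f 1 = 0)
  (HF1c : f1 1 > -1)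
  (HF2a : f 0 > 1)
  (HF2b : f1 0 > 0)
  (HF2c : 0 < wstar < 1)
  (HF2d : forall u, 0 <= u < wstar -> f u > 1)
  (HF3a : 0 < w0 < 1)
  (HF3b : f w0 = 1 - w0)
  (HF3c : forall u, 0 < u < 1 -> f u = 1 - u -> u = w0)
  (HF3d : f1 w0 < -1)
  (Htau : 0 <= tau)
  (Hc : 0 <= c)
  (Hmono : forall u, w0 <= u < 1 -> f1 u < 0)
  (HP : solves_P f tau c w w1 w2)
  (Hnonincr : forall x, w1 x <= 0) :
  forall x, w1 x < 0.
Proof.
  destruct Hf as [Hfd [_ [_ [_ [_ [[B HB] _]]]]]].
  destruct HP as [[Hw [Hw1 _]] [Heq [Hlm Hlp]]].
  assert (Hfc : continuity f)
    by (intros u; apply derivable_continuous_pt; exists (f1 u); apply Hfd).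
  exact (wave_strictly_decreasing f f1 w w1 w2 c tau B w0 Hfd HB HF1a HF1b (proj1 HF3a)
           (above_antidiagonal_before_crossing f w0 Hfc HF2a HF3a HF3c)
           Hmono Hc Htau Hw Hw1 Heq Hnonincr Hlm Hlp).
Qed.
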